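(* Assume the setting in the context, and suppose in addition that $S$ is locally optimal, i.e. $\sum_{a \in A} w_{(A,B)}(a)^2 \le \sum_{b \in B} w(b)^2$ for every $k$-replacement $(A,B)$ for $S$. Let $O \in \mathcal{I}$ and let $Y_e$, $P_x$, $N_x$ be as in the context. Then for every $x \in S$, \[ w(x) \;\ge\; \sum_{e \in P_x} \Bigl(2\, w_{(P_x,N_x)}(e) - \sum_{z \in Y_e} w(z)\Bigr). \]
   Context: Setting. $\mathcal{G}$ is a finite ground set with $|\mathcal{G}| = n$, and $f : 2^{\mathcal{G}} \to \mathbb{R}_{\ge 0}$ is a nonnegative monotone submodular function. $\mathcal{I} \subseteq 2^{\mathcal{G}}$ is a nonempty downward-closed family that is a $k$-exchange system: for all $A, B \in \mathcal{I}$ there is a collection $\{Y_e \subseteq B \setminus A : e \in A \setminus B\}$ such that (K1) $|Y_e| \le k$ for each $e$; (K2) every $x \in B \setminus A$ lies in at most $k$ of the sets $Y_e$; (K3) for every $C \subseteq A \setminus B$, $(B \setminus \bigcup_{e \in C} Y_e) \cup C \in \mathcal{I}$. This collection is extended by setting $Y_e = \{e\}$ for each $e \in A \cap B$. Weights. Fix $\alpha > 0$ and a total order $\prec$ on $\mathcal{G}$. For $S \in \mathcal{I}$ with elements $s_1 \prec \dots \prec s_m$ and $S_i = \{s_1,\dots,s_i\}$, define $w(s_i) = \lfloor (f(S_{i-1} \cup \{s_i\}) - f(S_{i-1}))/\alpha \rfloor \alpha$. A $k$-replacement for $S$ is a pair $(A,B)$ with $B \subseteq S$, $A \subseteq \mathcal{G}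 \setminus (S \setminus B)$, $|A| \le k$, $|B| \le k^2 - k + 1$, and $(S \setminus B) \cup A \in \mathcal{I}$. For such a pair, write $A = \{a_1 \prec \dots \prec a_r\}$, $A_i = \{a_1,\dots,a_i\}$, and define $w_{(A,B)}(a_i) = \lfloor (f((S\setminus B) \cup A_{i-1} \cup \{a_i\}) - f((S\setminus B)\cup A_{i-1}))/\alpha \rfloor \alpha$. Sets $P_x, N_x$. Given $S, O \in \mathcal{I}$, take the neighborhoods $\{Y_e\}_{e \in O}$ given by the $k$-exchange property applied with $A = O$, $B = S$ (extended by $Y_e = \{e\}$ for $e \in O \cap S$). For each $e \in O$ with $Y_e \ne \emptyset$, choose $x_e \in Y_e$ of maximum weight $w$ (ties broken arbitrarily). For $x \in S$, let $P_x = \{e \in O : x_e = x\}$ and $N_x = \bigcup_{e \in P_x} Y_e$. *)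

From HB Require Import structures.
From mathcomp Require Import all_boot all_order all_algebra.
Set Implicit Arguments. Unset Strict Implicit. Unset Printing Implicit Defensive.
Import Order.TTheory GRing.Theory Num.Theory.
Local Open Scope ring_scope.

Section Defs.
Variables (R : archiRealFieldType) (T : finType).

Definition nonneg_fun (f : {set T} -> R) := forall A, 0 <= f A.
Definition monotone_fun (f : {set T} -> R) :=
  forall A B : {set T}, A \subset B -> f A <= f B.
Definition submodular_fun (f : {set T} -> R) :=
  forall A B : {set T}, f (A :|: B) + f (A :&: B) <= f A + f B.

Definition downward_closed (I : pred {set T}) :=
  forall A B : {set T}, B \subset A -> I A -> I B.

Definition kexch_nbhd (I : pred {set T}) (k : nat) (A B : {set T})
    (Y : T -> {set T}) : Prop :=
  [/\ forall e, e \in A :\: B -> Y e \subset B :\: A,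
      forall e, e \in A :\: B -> (#|Y e| <= k)%N,
      forall x, x \in B :\: A -> (#|[set e in A :\: B | x \in Y e]| <= k)%N &
      forall C : {set T}, C \subset A :\: B ->
        I ((B :\: \bigcup_(e in C) Y e) :|: C)].

Definition k_exchange_system (I : pred {set T}) (k : nat) :=
  forall A B, I A -> I B -> exists Y : T -> {set T}, kexch_nbhd I k A B Y.

Definition total_order (prec : rel T) :=
  [/\ reflexive prec, antisymmetric prec, transitive prec & total prec].

Definition floor_mult (alpha x : R) : R := (Num.floor (x / alpha))%:~R * alpha.

Definition marg (f : {set T} -> R) (X : {set T}) (e : T) : R := f (e |: X) - f X.

Definition before (prec : rel T) (X : {set T}) (e : T) : {set T} :=
  [set t in X | prec t e && (t != e)].

Definition wS (f : {set T} -> R) (alpha : R) (prec : rel T) (S : {set T}) (s : T) : R :=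
  floor_mult alpha (marg f (before prec S s) s).

Definition wAB (f : {set T} -> R) (alpha : R) (prec : rel T) (S A B : {set T}) (a : T) : R :=
  floor_mult alpha (marg f ((S :\: B) :|: before prec A a) a).

Definition k_replacement (I : pred {set T}) (k : nat) (S A B : {set T}) :=
  [/\ B \subset S, A \subset ~: (S :\: B), (#|A| <= k)%N,
      (#|B| <= k ^ 2 - k + 1)%N & I ((S :\: B) :|: A)].

Definition locally_optimal (I : pred {set T}) (k : nat) (f : {set T} -> R)
    (alpha : R) (prec : rel T) (S : {set T}) :=
  forall A B : {set T}, k_replacement I k S A B ->
    \sum_(a in A) wAB f alpha prec S A B a ^+ 2 <= \sum_(b in B) wS f alpha prec S b ^+ 2.

Definition Pset (O : {set T}) (Y : T -> {set T}) (xe : T -> T) (x : T) : {set T} :=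
  [set e in O | (Y e != set0) && (xe e == x)].
Definition Nset (O : {set T}) (Y : T -> {set T}) (xe : T -> T) (x : T) : {set T} :=
  \bigcup_(e in Pset O Y xe x) Y e.

End Defs.

From HB Require Import structures.
From mathcomp Require Import all_boot all_order all_algebra.
From mathcomp Require Import zify ring lra.
Set Implicit Arguments. Unset Strict Implicit. Unset Printing Implicit Defensive.
Import Order.TTheory GRing.Theory Num.Theory.
Local Open Scope ring_scope.

(* Write W = w(x), c_e = w_{(P_x,N_x)}(e) and
   D = sum_{e in P_x} sum_{z in Y_e \ x} w(z).  Every e in P_x satisfies
   x in Y_e, Y_e within S, and w(z) <= W on Y_e (x is a heaviest element).
   1. Squares:  sum_{e in P_x} c_e^2 <= sum_{b in N_x} w(b)^2.  If x is not in O
      then P_x is inside O \ S, the pair (P_x, N_x) is a k-replacement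
      (|P_x| <= k by (K2), |N_x| <= 1 + k(k-1) by (K1)), and local optimality
      applies; if x is in O then P_x is inside {x}, and c_x <= w(x) by
      diminishing returns of f.
   2. Linear: N_x lies in {x} together with the sets Y_e \ x, so
      sum_{N_x} w <= W + D; as w <= W on N_x, the squares are <= W (W + D).
   3. Algebra: sum c_e^2 <= W M implies 2 sum c_e <= M + |P_x| W (from
      2 W c_e <= c_e^2 + W^2), and with M = W + D this is the theorem. *)

Lemma sum_bigcup_le (R : numDomainType) (T J : finType) (P : {set J})
    (A : J -> {set T}) (g : T -> R) : (forall z, 0 <= g z) ->
  \sum_(z in \bigcup_(e in P) A e) g z <= \sum_(e in P) \sum_(z in A e) g z.
Proof.
move=> g_ge0.
rewrite (exchange_big_dep (fun z => z \in \bigcup_(e in P) A e)) /=; last first.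
  by move=> e z eP zA; apply/bigcupP; exists e.
apply: ler_sum => z /bigcupP [e eP zA].
by rewrite (bigD1 e) /= ?eP ?zA // lerDl sumr_ge0.
Qed.

Lemma card_bigcup_le (T J : finType) (P : {set J}) (A : J -> {set T}) :
  (#|\bigcup_(e in P) A e| <= \sum_(e in P) #|A e|)%N.
Proof.
rewrite -(ler_nat int) natr_sum.
have := @sum_bigcup_le int T J P A (fun _ => 1) (fun _ => ler01).
by rewrite sumr_const (eq_bigr _ (fun e _ => sumr_const _ _)).
Qed.

Lemma sum_subset_le (R : numDomainType) (T : finType) (A B : {set T})
    (g : T -> R) : A \subset B -> (forall z, z \in B -> 0 <= g z) ->
  \sum_(z in A) g z <= \sum_(z in B) g z.
Proof.
move=> AB g_ge0; rewrite [X in _ <= X](big_setID A) /= (setIidPr AB) lerDl.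
by apply: sumr_ge0 => z; rewrite inE => /andP [_ /g_ge0].
Qed.

(* The key algebraic inequality: a bound W * M on the sum of the squares of
   the c_e yields a linear bound on their sum, via 2 W c <= c^2 + W^2. *)
Lemma twice_sum_le (R : realFieldType) (J : finType) (P : {set J})
    (c : J -> R) (W M : R) : 0 <= W -> 0 <= M ->
  \sum_(e in P) c e ^+ 2 <= W * M -> 2 * \sum_(e in P) c e <= M + W *+ #|P|.
Proof.
move=> W_ge0 M_ge0 sq_le; have [W0 | W_neq0] := eqVneq W 0.
  have c0 : forall e, e \in P -> c e = 0.
    move=> e eP; apply/eqP; rewrite -sqrf_eq0; apply/eqP; move: e eP.
    apply: psumr_eq0P => [e _ |]; first exact: sqr_ge0.
    rewrite W0 mul0r in sq_le.
    by apply/eqP; rewrite eq_le sq_le sumr_ge0 // => e _; apply: sqr_ge0.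
  by rewrite big1 // W0 mulr0 mul0rn addr0.
have W_gt0 : 0 < W by rewrite lt_neqAle eq_sym W_neq0.
rewrite -(ler_pM2l W_gt0) mulrDr mulrnAr -expr2.
have sq_bound : W * (2 * \sum_(e in P) c e) <= \sum_(e in P) (c e ^+ 2 + W ^+ 2).
  rewrite mulr_sumr mulr_sumr; apply: ler_sum => e _; rewrite -subr_ge0.
  have -> : c e ^+ 2 + W ^+ 2 - W * (2 * c e) = (c e - W) ^+ 2 by ring.
  exact: sqr_ge0.
by apply: (le_trans sq_bound); rewrite big_split sumr_const lerD2r.
Qed.

Section RoundedMarginals.
Variables (R : archiRealFieldType) (T : finType).

Lemma floor_mult_ge0 (alpha x : R) :
  0 < alpha -> 0 <= x -> 0 <= floor_mult alpha x.
Proof.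
move=> alpha_gt0 x_ge0; apply: mulr_ge0; last exact: ltW.
by rewrite ler0z floor_ge0 divr_ge0 // ltW.
Qed.

Lemma floor_mult_le (alpha x y : R) :
  0 < alpha -> x <= y -> floor_mult alpha x <= floor_mult alpha y.
Proof.
move=> alpha_gt0 xy; apply: ler_wpM2r; first exact: ltW.
by rewrite ler_int le_floor // ler_wpM2r // invr_ge0 ltW.
Qed.

Lemma marg_ge0 (f : {set T} -> R) (X : {set T}) (e : T) :
  monotone_fun f -> 0 <= marg f X e.
Proof. by move=> f_mono; rewrite /marg subr_ge0 f_mono // subsetUr. Qed.

Lemma marg_antitone (f : {set T} -> R) (X Z : {set T}) (e : T) :
  submodular_fun f -> X \subset Z -> e \notin Z -> marg f Z e <= marg f X e.
Proof.
move=> f_sub XZ eZ; have := f_sub (e |: X) Z.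
rewrite -setUA (setUidPr XZ) setIUl (setIidPl XZ).
have -> : [set e] :&: Z = set0.
  by apply/setP => y; rewrite !inE; case: eqP => // ->; rewrite (negbTE eZ).
by rewrite set0U /marg => ?; lra.
Qed.

End RoundedMarginals.

Section ExchangeBound.
Variables (R : archiRealFieldType) (T : finType).
Variables (f : {set T} -> R) (I : pred {set T}) (k : nat) (alpha : R).
Variables (prec : rel T) (S O : {set T}) (Y : T -> {set T}) (xe : T -> T).
Variable x : T.

Local Notation w := (wS f alpha prec S).
Local Notation P := (Pset O Y xe x).
Local Notation N := (Nset O Y xe x).
Local Notation c := (wAB f alpha prec S P N).

Hypotheses (f_mono : monotone_fun f) (f_sub : submodular_fun f).
Hypothesis alpha_gt0 : 0 < alpha.
Hypothesis S_opt : locally_optimal I k f alpha prec S.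
Hypothesis Y_nbhd : kexch_nbhd I k O S Y.
Hypothesis Y_common : forall e, e \in O :&: S -> Y e = [set e].
Hypothesis xe_max : forall e, e \in O -> Y e != set0 ->
  xe e \in Y e /\ forall z, z \in Y e -> w z <= w (xe e).
Hypothesis xS : x \in S.

Lemma w_ge0 z : 0 <= w z.
Proof. exact/floor_mult_ge0/marg_ge0. Qed.

Lemma Pset_spec e : e \in P ->
  [/\ e \in O, x \in Y e, Y e \subset S & forall z, z \in Y e -> w z <= w x].
Proof.
rewrite inE => /and3P [eO Ye_neq0 /eqP xe_x].
have [xY w_max] := xe_max eO Ye_neq0; rewrite xe_x in xY w_max; split=> //.
have [eS | eNS] := boolP (e \in S); first by rewrite Y_common ?inE ?eO // sub1set.
have [Y_sub _ _ _] := Y_nbhd.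
by apply: subset_trans (Y_sub e _) (subsetDl _ _); rewrite inE eO eNS.
Qed.

Lemma Nset_le_x b : b \in N -> w b <= w x.
Proof. by move=> /bigcupP [e /Pset_spec [_ _ _ w_le] /w_le]. Qed.

Lemma Nset_cover : N \subset x |: \bigcup_(e in P) (Y e :\ x).
Proof.
apply/subsetP => b /bigcupP [e eP bY]; rewrite !inE.
by case: (eqVneq b x) => //= bx; apply/bigcupP; exists e; rewrite // !inE bx.
Qed.

Lemma Pset_common : x \in O -> P \subset [set x].
Proof.
move=> xO; apply/subsetP => e eP; have [eO xY _ _] := Pset_spec eP.
have [eS | eNS] := boolP (e \in S).
  by move: xY; rewrite Y_common ?inE ?eO // eq_sym.
have [Y_sub _ _ _] := Y_nbhd; have eOS : e \in O :\: S by rewrite inE eO eNS.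
by have := subsetP (Y_sub e eOS) x xY; rewrite !inE xO.
Qed.

Lemma Pset_private : x \notin O -> P \subset O :\: S.
Proof.
move=> xNO; apply/subsetP => e eP; have [eO xY _ _] := Pset_spec eP.
rewrite inE eO andbT; apply: contra xNO => eS.
by move: xY; rewrite Y_common ?inE ?eO // => /eqP ->.
Qed.

Lemma card_Pset : x \notin O -> (#|P| <= k)%N.
Proof.
move=> xNO; have [_ _ Y_deg _] := Y_nbhd.
apply: leq_trans (Y_deg x _); last by rewrite inE xNO xS.
apply/subset_leq_card/subsetP => e eP.
by rewrite inE (subsetP (Pset_private xNO)) //=; case: (Pset_spec eP).
Qed.

(* By (K1), each Y_e adds at most k - 1 elements besides x, so
   |N_x| <= 1 + k (k - 1). *)
Lemma card_Nset : x \notin O -> (#|N| <= k ^ 2 - k + 1)%N.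
Proof.
move=> xNO; have [_ Y_card _ _] := Y_nbhd.
have pieces : (\sum_(e in P) #|Y e :\ x| <= #|P| * (k - 1))%N.
  rewrite -sum_nat_const; apply: leq_sum => e eP.
  have [_ xY _ _] := Pset_spec eP.
  have := Y_card e (subsetP (Pset_private xNO) e eP).
  by rewrite (cardsD1 x (Y e)) xY; lia.
have := subset_leq_card Nset_cover.
have := (leq_card_setU [set x] (\bigcup_(e in P) (Y e :\ x))).1.
have := card_bigcup_le P (fun e => Y e :\ x).
have := card_Pset xNO; rewrite cards1; nia.
Qed.

Lemma replacement_PN : x \notin O -> k_replacement I k S P N.
Proof.
move=> xNO; have [_ _ _ Y_exch] := Y_nbhd; split.
- by apply/subsetP => b /bigcupP [e /Pset_spec [_ _ /subsetP YS _]] /YS.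
- apply/subsetP => e /(subsetP (Pset_private xNO)).
  by rewrite !inE negb_and negbK => /andP [-> _]; rewrite orbT.
- exact: card_Pset.
- exact: card_Nset.
- exact/Y_exch/Pset_private.
Qed.

Lemma sqr_Pset_le_Nset : \sum_(e in P) c e ^+ 2 <= \sum_(b in N) w b ^+ 2.
Proof.
have [xO | xNO] := boolP (x \in O); last exact/S_opt/replacement_PN.
move: (Pset_common xO); rewrite subset1 => /orP [/eqP P1 | /eqP P0]; last first.
  by rewrite P0 big_set0 sumr_ge0 // => b _; apply: sqr_ge0.
have N1 : N = [set x] by rewrite /Nset P1 big_set1 Y_common // inE xO xS.
rewrite N1 P1 !big_set1 ler_sqr ?nnegrE ?w_ge0 ?floor_mult_ge0 ?marg_ge0 //.
apply/floor_mult_le/marg_antitone => //; last by rewrite !inE eqxx !andbF.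
by apply/subsetP => t; rewrite !inE => /andP [tS /andP [_ tx]]; rewrite tS tx.
Qed.

Lemma sqr_Pset_le :
  \sum_(e in P) c e ^+ 2 <= w x * (w x + \sum_(e in P) \sum_(z in Y e :\ x) w z).
Proof.
have sum_N : \sum_(b in N) w b <= w x + \sum_(e in P) \sum_(z in Y e :\ x) w z.
  apply: le_trans (sum_subset_le Nset_cover (fun z _ => w_ge0 z)) _.
  rewrite big_setU1 /=; last by apply/bigcupP => -[e _]; rewrite !inE eqxx.
  by rewrite lerD2l sum_bigcup_le // => z; apply: w_ge0.
apply: (le_trans sqr_Pset_le_Nset); apply: le_trans (ler_wpM2l (w_ge0 x) sum_N).
rewrite mulr_sumr; apply: ler_sum => b bN.
by rewrite expr2 ler_wpM2r ?w_ge0 ?Nset_le_x.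
Qed.

End ExchangeBound.

Theorem mainTheorem3 (R : archiRealFieldType) (T : finType)
    (f : {set T} -> R) (I : pred {set T}) (k : nat) (alpha : R) (prec : rel T)
    (S O : {set T}) (Y : T -> {set T}) (xe : T -> T) :
  nonneg_fun f -> monotone_fun f -> submodular_fun f ->
  (exists A, I A) -> downward_closed I -> k_exchange_system I k ->
  0 < alpha -> total_order prec ->
  I S -> I O ->
  locally_optimal I k f alpha prec S ->
  kexch_nbhd I k O S Y ->
  (forall e, e \in O :&: S -> Y e = [set e]) ->
  (forall e, e \in O -> Y e != set0 ->
     xe e \in Y e /\ forall z, z \in Y e -> wS f alpha prec S z <= wS f alpha prec S (xe e)) ->
  forall x, x \in S ->
    wS f alpha prec S x >=
    \sum_(e in Pset O Y xe x)
       (2 * wAB f alpha prec S (Pset O Y xe x) (Nset O Y xe x) e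
        - \sum_(z in Y e) wS f alpha prec S z).
Proof.
move=> _ f_mono f_sub _ _ _ alpha_gt0 _ _ _ S_opt Y_nbhd Y_common xe_max x xS.
set w := wS f alpha prec S; set P := Pset O Y xe x.
set D := \sum_(e in P) \sum_(z in Y e :\ x) w z.
have w_ge0' := w_ge0 prec S f_mono alpha_gt0.
have split_Y e : e \in P -> \sum_(z in Y e) w z = w x + \sum_(z in Y e :\ x) w z.
  by case/(Pset_spec Y_nbhd Y_common xe_max) => _ xY _ _; rewrite (big_setD1 x).
under eq_bigr => e eP do rewrite split_Y //.
rewrite sumrB big_split /= sumr_const -mulr_sumr -/D.
have D_ge0 : 0 <= D by do 2 apply: sumr_ge0 => ? _.
have := twice_sum_le (w_ge0' x) (addr_ge0 (w_ge0' x) D_ge0)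
  (sqr_Pset_le f_mono f_sub alpha_gt0 S_opt Y_nbhd Y_common xe_max xS).
by rewrite -/w -/P -/D; lra.
Qed.
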